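(* Under the standing assumptions below, $(V,+)$ has no normal subgroups invariant under $\mathcal{A}=\langle A,A'\rangle$ other than $0$ and $V$.
   Context: Skew left brace $(B,+,\circ)$: groups $(B,+)$, $(B,\circ)$ with $a\circ(b+c)=a\circ b-a+a\circ c$; $\lambda_a(b)=-a+a\circ b$, $\sigma_a(b)=-a+b+a$, $a*b=-a+a\circ b-b$. Ideal: normal subgroup $I$ of $(B,+)$, $\lambda_a(I)\subseteq I$ for all $a$, normal in $(B,\circ)$. $I*J$ = additive subgroup generated by $\{i*j\}$; $B^{(2)}=B*B$, $B^{(3)}=B^{(2)}*B$. Standing assumptions: $B$ is a finite skew left brace and $X\subseteq B$ with $|X|\ge3$ and $\lambda_a(X)=X$, $\sigma_a(X)=X$ for all $a\in B$; $B$ is additively generated by $X$; the ideal $V$ generated by $\{x-y:x,y\in X\}$ is the smallest non-zero ideal of $B$; $B/V$ is a trivial skew left brace with cyclic additive group; the group $\{\sigma_a\lambda_b|_X:a,b\in V\}$ acts transitively on $X$; and $B^{(3)}=0$. Fix $x\in X$. Let $A\in\mathrm{Aut}(V,+)$ be $Av=x+v-x$ and $A'\in\mathrm{Aut}(V,+)$ the restriction of $\lambda_x$ to $V$; $\mathcal{A}=\langle A,A'\rangle\le\mathrm{Aut}(V)$. *)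

From mathcomp Require Import all_boot.
Set Implicit Arguments. Unset Strict Implicit. Unset Printing Implicit Defensive.

Record skew_brace (T : finType) := SkewBrace {
  badd : T -> T -> T; bopp : T -> T; bzero : T;
  bcirc : T -> T -> T; binv : T -> T; bone : T;
  baddA : associative badd;
  badd0l : left_id bzero badd; badd0r : right_id bzero badd;
  baddNl : forall a, badd (bopp a) a = bzero;
  baddNr : forall a, badd a (bopp a) = bzero;
  bcircA : associative bcirc;
  bcirc1l : left_id bone bcirc; bcirc1r : right_id bone bcirc;
  bcircVl : forall a, bcirc (binv a) a = bone;
  bcircVr : forall a, bcirc a (binv a) = bone;
  bcompat : forall a b c,
    bcirc a (badd b c) = badd (badd (bcirc a b) (bopp a)) (bcirc a c)
}.

Section Brace.
Variables (T : finType) (B : skew_brace T).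
Local Notation "a + b" := (badd B a b).
Local Notation "- a" := (bopp B a).
Local Notation "a - b" := (badd B a (bopp B b)).
Local Notation "0" := (bzero B).
Local Notation "a \bo b" := (bcirc B a b) (at level 40, left associativity).

Definition blam (a b : T) : T := - a + (a \bo b).
Definition bsig (a b : T) : T := - a + b + a.
Definition bstar (a b : T) : T := - a + (a \bo b) - b.
Fixpoint bnatmul (n : nat) (g : T) : T :=
  if n is m.+1 then g + bnatmul m g else 0.

Definition is_addsubgroup (S : {set T}) : bool :=
  [&& 0 \in S, [forall a in S, forall b in S, (a + b) \in S]
    & [forall a in S, (- a) \in S]].

Definition is_circsubgroup (S : {set T}) : bool :=
  [&& bone B \in S, [forall a in S, forall b in S, (a \bo b) \in S]
    & [forall a in S, binv B a \in S]].

Definition is_ideal (I : {set T}) : bool :=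
  [&& is_addsubgroup I,
      [forall a, forall i in I, (a + i - a) \in I],
      [forall a, forall i in I, blam a i \in I],
      is_circsubgroup I &
      [forall a, forall i in I, ((a \bo i) \bo binv B a) \in I]].

Definition add_gen (S : {set T}) : {set T} :=
  [set y | [forall H : {set T}, (is_addsubgroup H && (S \subset H)) ==> (y \in H)]].

Definition ideal_gen (S : {set T}) : {set T} :=
  [set y | [forall I : {set T}, (is_ideal I && (S \subset I)) ==> (y \in I)]].

Definition B2 : {set T} := add_gen [set bstar a b | a in [set: T], b in [set: T]].
Definition B3 : {set T} := add_gen [set bstar a b | a in B2, b in [set: T]].

Definition Vid (X : {set T}) : {set T} := ideal_gen [set a - b | a in X, b in X].

Definition standing (X : {set T}) : Prop :=
  let V := Vid X in
  3 <= #|X| /\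
      (forall a, [set blam a y | y in X] = X) /\
      (forall a, [set bsig a y | y in X] = X) /\
      add_gen X = setT /\
      (V != [set 0] /\ (forall I, is_ideal I -> I != [set 0] -> V \subset I))  /\
      (* B/V is a trivial skew brace: a o b = a + b modulo V *)
      (forall a b, - (a + b) + (a \bo b) \in V) /\
      (* B/V has cyclic additive group *)
      (exists g, forall b, exists n, - bnatmul n g + b \in V) /\
      (forall y z, y \in X -> z \in X ->
         exists a b, [/\ a \in V, b \in V & bsig a (blam b y) = z]) /\
      B3 = [set 0].

Definition autA (x v : T) : T := x + v - x.
Definition autAinv (x v : T) : T := - x + v + x.
Definition autA' (x v : T) : T := blam x v.
Definition autA'inv (x v : T) : T := blam (binv B x) v.

(* the group <A, A'>, as maps (relevant on V): all finite composites of
   A, A^-1, A', A'^-1 *)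
Inductive in_calA (x : T) : (T -> T) -> Prop :=
  | calA_id : in_calA x id
  | calA_A f : in_calA x f -> in_calA x (autA x \o f)
  | calA_Ainv f : in_calA x f -> in_calA x (autAinv x \o f)
  | calA_A' f : in_calA x f -> in_calA x (autA' x \o f)
  | calA_A'inv f : in_calA x f -> in_calA x (autA'inv x \o f).

Definition normal_sub_of (N V : {set T}) : Prop :=
  [/\ N \subset V, is_addsubgroup N &
      forall v n, v \in V -> n \in N -> v + n - v \in N].

Definition calA_invariant (x : T) (N : {set T}) : Prop :=
  forall f, in_calA x f -> forall n, n \in N -> f n \in N.

End Brace.

(* Everything rests on one observation: since B^(3) = 0 and V is the smallest
   non-zero ideal, v * b = 0 for all v in V, i.e. lambda_v = id.  As B/V is a
   trivial brace, a + b and a o b lie in the same coset of V, so a |-> lambda_a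
   becomes a homomorphism from (B,+); so is a |-> (n |-> a + n - a).  For either
   map the elements stabilizing N form an additive subgroup (N is finite), which
   contains x by A- resp. A'-invariance and V by normality resp. lambda_V = id,
   hence every y = (y - x) + x of X, hence all of B.  Thus N is an ideal inside
   V, and minimality of V leaves N = 0 or N = V. *)

From mathcomp Require Import all_boot.
Set Implicit Arguments. Unset Strict Implicit. Unset Printing Implicit Defensive.

Section SkewBrace.
Variables (T : finType) (B : skew_brace T).
Local Notation "a + b" := (badd B a b).
Local Notation "- a" := (bopp B a).
Local Notation "a - b" := (badd B a (bopp B b)).
Local Notation "0" := (bzero B).
Local Notation "a \bo b" := (bcirc B a b) (at level 40, left associativity).
Local Notation lam := (blam B).
Local Notation star := (bstar B).
Local Notation inv := (binv B).
Local Notation conj := (autA B).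

Lemma addrA a b c : a + (b + c) = a + b + c. Proof. exact: baddA. Qed.
Lemma add0r a : 0 + a = a. Proof. exact: badd0l. Qed.
Lemma addr0 a : a + 0 = a. Proof. exact: badd0r. Qed.
Lemma addNr a : - a + a = 0. Proof. exact: baddNl. Qed.
Lemma addrN a : a - a = 0. Proof. exact: baddNr. Qed.
Lemma addKr a b : - a + (a + b) = b. Proof. by rewrite addrA addNr add0r. Qed.
Lemma addNKr a b : a + (- a + b) = b. Proof. by rewrite addrA addrN add0r. Qed.
Lemma addrK a b : a + b - b = a. Proof. by rewrite -addrA addrN addr0. Qed.
Lemma addrNK a b : a - b + b = a. Proof. by rewrite -addrA addNr addr0. Qed.

Lemma addrI a : injective (badd B a).
Proof. by move=> b c e; rewrite -(addKr a b) e addKr. Qed.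

Lemma addr_eq0 a b : a + b = 0 -> a = - b.
Proof. by move=> e; rewrite -(addrK a b) e add0r. Qed.

Lemma opprK a : - - a = a.
Proof. by rewrite -(addr_eq0 (addrN a)). Qed.

Lemma opprD a b : - (a + b) = - b + - a.
Proof. by apply/esym/addr_eq0; rewrite -addrA addKr addNr. Qed.

Lemma oppr0 : - 0 = 0.
Proof. by rewrite -(addr_eq0 (addr0 0)). Qed.

Lemma circr0 a : a \bo 0 = a.
Proof.
have e : a \bo 0 + 0 = a \bo 0 + (- a + a \bo 0).
  by rewrite addr0 addrA -bcompat add0r.
by rewrite -(addNKr a (a \bo 0)) -(addrI e) addr0.
Qed.

Lemma bone0 : bone B = 0.
Proof. by rewrite -(circr0 (bone B)) bcirc1l. Qed.

Lemma circE a b : a \bo b = a + lam a b.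
Proof. by rewrite /blam addNKr. Qed.

Lemma lamD a b c : lam a (b + c) = lam a b + lam a c.
Proof. by rewrite /blam bcompat !addrA. Qed.

Lemma lamr0 a : lam a 0 = 0.
Proof. by rewrite /blam circr0 addNr. Qed.

Lemma lamN a b : lam a (- b) = - lam a b.
Proof. by apply: addr_eq0; rewrite -lamD addNr lamr0. Qed.

Lemma lamM a b : lam (a \bo b) =1 lam a \o lam b.
Proof. by move=> c; rewrite /= [lam b c]/blam lamD lamN /blam opprD opprK bcircA -addrA addNKr. Qed.

Lemma lam0 : lam 0 =1 id.
Proof. by move=> c; rewrite /blam -bone0 bcirc1l bone0 oppr0 add0r. Qed.

Lemma lamE a b : lam a b = star a b + b.
Proof. by rewrite /bstar /blam addrNK. Qed.

Lemma starD a b c : star a (b + c) = star a b + conj b (star a c).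
Proof. by rewrite /bstar /autA bcompat opprD !addrA addrNK. Qed.

Lemma conjD a : {morph conj a : y z / y + z}.
Proof. by move=> y z; rewrite /autA !addrA addrNK. Qed.

Lemma conj0 : conj 0 =1 id.
Proof. by move=> n; rewrite /autA add0r oppr0 addr0. Qed.

Lemma conjM a b : conj (a + b) =1 conj a \o conj b.
Proof. by move=> n /=; rewrite /autA opprD !addrA. Qed.

Lemma circ_conjE a y :
  a \bo y \bo inv a = conj a (lam a y) + conj a (lam a (star y (inv a))).
Proof.
rewrite -bcircA (circE y) (lamE y) bcompat bcompat bcircVr bone0 addr0.
by rewrite /autA -!circE addrA.
Qed.

Lemma addsubP (S : {set T}) :
  reflect [/\ 0 \in S, {in S &, forall a b, a + b \in S} & {in S, forall a, - a \in S}]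
          (is_addsubgroup B S).
Proof.
apply: (iffP and3P) => [[S0 /forall_inP SD /forall_inP SN]|[S0 SD SN]].
  by split=> // a b Sa; apply/forall_inP: b; apply: SD.
by split=> //; apply/forall_inP=> a Sa; [apply/forall_inP=> b; apply: SD | apply: SN].
Qed.

Lemma circsubP (S : {set T}) :
  reflect [/\ bone B \in S, {in S &, forall a b, a \bo b \in S} & {in S, forall a, inv a \in S}]
          (is_circsubgroup B S).
Proof.
apply: (iffP and3P) => [[S1 /forall_inP SM /forall_inP SV]|[S1 SM SV]].
  by split=> // a b Sa; apply/forall_inP: b; apply: SM.
by split=> //; apply/forall_inP=> a Sa; [apply/forall_inP=> b; apply: SM | apply: SV].
Qed.

Lemma idealP (I : {set T}) :
  reflect [/\ is_addsubgroup B I, forall a, {homo conj a : i / i \in I},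
              forall a, {homo lam a : i / i \in I}, is_circsubgroup B I &
              forall a i, i \in I -> a \bo i \bo inv a \in I]
          (is_ideal B I).
Proof.
apply: (iffP and5P) => [[I1 /forallP I2 /forallP I3 I4 /forallP I5]|[I1 I2 I3 I4 I5]].
  by split=> // a; [apply/forall_inP: (I2 a) | apply/forall_inP: (I3 a) | apply/forall_inP: (I5 a)].
by split=> //; apply/forallP=> a; apply/forall_inP=> i; [apply: I2 | apply: I3 | apply: I5].
Qed.

Lemma ideal_of_star (I : {set T}) :
  is_addsubgroup B I -> (forall a, {homo conj a : i / i \in I}) ->
  (forall a, {homo lam a : i / i \in I}) ->
  (forall i b, i \in I -> star i b \in I) -> is_ideal B I.
Proof.
move=> Isub Iconj Ilam Istar; have [I0 ID IN] := addsubP _ Isub.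
apply/idealP; split=> //; last first.
  by move=> a i Ii; rewrite circ_conjE; apply: ID; apply/Iconj/Ilam => //; apply: Istar.
apply/circsubP; split; first by rewrite bone0.
  by move=> a b Ia Ib; rewrite circE; apply: ID => //; apply: Ilam.
move=> a Ia; have e : inv a + lam (inv a) a = 0 by rewrite -circE bcircVl bone0.
by rewrite (addr_eq0 e); apply/IN/Ilam.
Qed.

Lemma mem_add_gen (S : {set T}) y :
  reflect (forall H, is_addsubgroup B H -> S \subset H -> y \in H) (y \in add_gen B S).
Proof.
rewrite inE; apply: (iffP forallP) => [yS H HB SH | yS H].
  by move/implyP: (yS H); apply; rewrite HB.
by apply/implyP=> /andP[]; apply: yS.
Qed.

Lemma add_gen_sub (S : {set T}) : S \subset add_gen B S.
Proof. by apply/subsetP=> y Sy; apply/mem_add_gen=> H _ /subsetP; apply. Qed.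

Lemma add_gen_min (S H : {set T}) :
  is_addsubgroup B H -> S \subset H -> add_gen B S \subset H.
Proof. by move=> HB SH; apply/subsetP=> y /mem_add_gen; apply. Qed.

Lemma add_gen_addsub (S : {set T}) : is_addsubgroup B (add_gen B S).
Proof.
apply/addsubP; split; first by apply/mem_add_gen=> H /addsubP[].
  move=> a b /mem_add_gen Sa /mem_add_gen Sb; apply/mem_add_gen=> H HB SH.
  by have [_ HD _] := addsubP _ HB; apply: HD; [apply: Sa | apply: Sb].
move=> a /mem_add_gen Sa; apply/mem_add_gen=> H HB SH.
by have [_ _ HN] := addsubP _ HB; apply/HN/Sa.
Qed.

Lemma add_gen_homo (S : {set T}) (f : T -> T) :
  {morph f : y z / y + z} -> {homo f : y / y \in S >-> y \in add_gen B S} ->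
  {homo f : y / y \in add_gen B S}.
Proof.
move=> fD fS; have [G0 GD GN] := addsubP _ (add_gen_addsub S).
have f0 : f 0 = 0 by apply: (@addrI (f 0)); rewrite -fD !addr0.
have fN y : f (- y) = - f y by apply: addr_eq0; rewrite -fD addNr.
pose P := [set y in add_gen B S | f y \in add_gen B S].
have PS : add_gen B S \subset P.
  apply: add_gen_min; last by apply/subsetP=> y Sy; rewrite inE fS ?(subsetP (add_gen_sub S)).
  apply/addsubP; split; first by rewrite inE G0 f0.
    by move=> a b /setIdP[Ga fGa] /setIdP[Gb fGb]; rewrite inE fD !GD.
  by move=> a /setIdP[Ga fGa]; rewrite inE fN !GN.
by move=> y /(subsetP PS) /setIdP[].
Qed.

Lemma mem_ideal_gen (S : {set T}) y :
  reflect (forall I, is_ideal B I -> S \subset I -> y \in I) (y \in ideal_gen B S).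
Proof.
rewrite inE; apply: (iffP forallP) => [yS I IB SI | yS I].
  by move/implyP: (yS I); apply; rewrite IB.
by apply/implyP=> /andP[]; apply: yS.
Qed.

Lemma ideal_gen_sub (S : {set T}) : S \subset ideal_gen B S.
Proof. by apply/subsetP=> y Sy; apply/mem_ideal_gen=> I _ /subsetP; apply. Qed.

Lemma ideal_gen_ideal (S : {set T}) : is_ideal B (ideal_gen B S).
Proof.
have closed1 (f : T -> T) : (forall I, is_ideal B I -> {homo f : i / i \in I}) ->
    {homo f : i / i \in ideal_gen B S}.
  by move=> fI i /mem_ideal_gen Si; apply/mem_ideal_gen=> I IB SI; apply/fI/Si.
have closed2 (f : T -> T -> T) :
    (forall I, is_ideal B I -> {in I &, forall i j, f i j \in I}) ->
    {in ideal_gen B S &, forall i j, f i j \in ideal_gen B S}.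
  move=> fI i j /mem_ideal_gen Si /mem_ideal_gen Sj.
  by apply/mem_ideal_gen=> I IB SI; apply: fI; [| apply: Si | apply: Sj].
have elem (y : T) : (forall I, is_ideal B I -> y \in I) -> y \in ideal_gen B S.
  by move=> yI; apply/mem_ideal_gen=> I IB _; apply: yI.
apply/idealP; split.
- apply/addsubP; split.
  + by apply: elem=> I /idealP[/addsubP[]].
  + by apply: closed2=> I /idealP[/addsubP[]].
  + by apply: closed1=> I /idealP[/addsubP[]].
- by move=> a; apply: closed1=> I /idealP[].
- by move=> a; apply: closed1=> I /idealP[].
- apply/circsubP; split.
  + by apply: elem=> I /idealP[_ _ _ /circsubP[]].
  + by apply: closed2=> I /idealP[_ _ _ /circsubP[]].
  + by apply: closed1=> I /idealP[_ _ _ /circsubP[]].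
- by move=> a; apply: closed1=> I /idealP[_ _ _ _]; apply.
Qed.

Lemma star_B2 a b : star a b \in B2 B.
Proof. by apply: (subsetP (add_gen_sub _)); apply/imset2P; exists a b. Qed.

Lemma B2_ideal : is_ideal B (B2 B).
Proof.
have B2_addsub : is_addsubgroup B (B2 B) := add_gen_addsub _.
have [_ GD GN] := addsubP _ B2_addsub.
apply: ideal_of_star => //.
- move=> a; apply: add_gen_homo; first exact: conjD.
  move=> y /imset2P[b c _ _ ->].
  have -> : conj a (star b c) = - star b a + star b (a + c) by rewrite starD addKr.
  by apply: GD; [apply: GN |]; apply: star_B2.
- by move=> a i Gi; rewrite lamE; apply: GD => //; apply: star_B2.
- by move=> i b _; apply: star_B2.
Qed.

Lemma star_min_ideal (V : {set T}) :
  (forall I, is_ideal B I -> I != [set 0] -> V \subset I) -> B3 B = [set 0] ->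
  forall v b, v \in V -> star v b = 0.
Proof.
move=> Vmin B3_0 v b Vv; have [B2_0 | B2_neq0] := eqVneq (B2 B) [set 0].
  by have := star_B2 v b; rewrite B2_0 inE => /eqP.
have VB2 := subsetP (Vmin _ B2_ideal B2_neq0).
have : star v b \in B3 B.
  by apply: (subsetP (add_gen_sub _)); apply/imset2P; exists v b => //; apply: VB2.
by rewrite B3_0 inE => /eqP.
Qed.

Lemma homo_cancel_set (N : {set T}) (f g : T -> T) :
  cancel f g -> {homo f : n / n \in N} -> {homo g : n / n \in N}.
Proof.
move=> fK fN n Nn; have fNN : f @: N \subset N by apply/subsetP=> _ /imsetP[m Nm ->]; apply: fN.
have /eqP fN_eq : f @: N == N by rewrite eqEcard fNN (card_imset _ (can_inj fK)) leqnn.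
have /imsetP[m Nm ->] : n \in f @: N by rewrite fN_eq.
by rewrite fK.
Qed.

Section Stabilizer.
Variables (phi : T -> T -> T) (N : {set T}).
Hypotheses (phi0 : phi 0 =1 id) (phiD : forall a b, phi (a + b) =1 phi a \o phi b).

Definition stab : {set T} := [set a | [forall n in N, phi a n \in N]].

Lemma stabP a : reflect {homo phi a : n / n \in N} (a \in stab).
Proof. by rewrite inE; apply: forall_inP. Qed.

Lemma stab_addsub : is_addsubgroup B stab.
Proof.
apply/addsubP; split; first by apply/stabP=> n; rewrite phi0.
  by move=> a b /stabP Sa /stabP Sb; apply/stabP=> n Nn; rewrite phiD; apply/Sa/Sb.
move=> a /stabP Sa; apply/stabP; apply: homo_cancel_set Sa => n.
by have := phiD (- a) a n; rewrite addNr phi0.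
Qed.

Lemma stab_setT (X D : {set T}) x :
  add_gen B X = setT -> x \in X -> (forall y, y \in X -> y - x \in D) ->
  {homo phi x : n / n \in N} -> (forall v, v \in D -> {homo phi v : n / n \in N}) ->
  forall a, {homo phi a : n / n \in N}.
Proof.
move=> X_gen Xx XD Nx ND a; apply/stabP.
suff : add_gen B X \subset stab by rewrite X_gen => /subsetP; apply; rewrite inE.
apply: add_gen_min; first exact: stab_addsub.
apply/subsetP=> y Xy; apply/stabP=> n Nn.
by rewrite -(addrNK y x) phiD; apply/ND/Nx; rewrite ?XD.
Qed.

End Stabilizer.

Section TrivialQuotient.
Variable V : {set T}.
Hypotheses (V_addsub : is_addsubgroup B V)
  (V_triv : forall a b, - (a + b) + (a \bo b) \in V)
  (lamV : forall v, v \in V -> lam v =1 id).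

Lemma lam_coset a b : - a + b \in V -> lam b =1 lam a.
Proof.
have [_ VD VN] := addsubP _ V_addsub.
move=> Vab n; have {1}-> : b = a \bo (inv a \bo b) by rewrite bcircA bcircVr bcirc1l.
suff /lamV Vc : inv a \bo b \in V by rewrite lamM /= Vc.
have Vinv : inv a + a \in V.
  by have /VN := V_triv (inv a) a; rewrite bcircVl bone0 addr0 opprK.
have Vsum : inv a + b \in V by rewrite -(addNKr a b) addrA; apply: VD.
by rewrite -(addNKr (inv a + b) (inv a \bo b)); apply: VD.
Qed.

Lemma lamD_triv a b : lam (a + b) =1 lam a \o lam b.
Proof.
have [_ _ VN] := addsubP _ V_addsub.
move=> n; rewrite -lamM; apply: lam_coset.
by have /VN := V_triv a b; rewrite opprD opprK.
Qed.

End TrivialQuotient.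

End SkewBrace.

Theorem lemma5p4 (T : finType) (B : skew_brace T) (X : {set T}) (x : T) :
  standing B X -> x \in X ->
  forall N : {set T},
    normal_sub_of B N (Vid B X) -> calA_invariant B x N ->
    N = [set bzero B] \/ N = Vid B X.
Proof.
move=> [_ [_ [_ [X_gen [[_ Vmin] [V_triv [_ [_ B3_0]]]]]]]] Xx N [NV N_addsub Nnorm] NA.
set V := Vid B X in Vmin V_triv NV Nnorm *.
have /idealP[V_addsub _ _ _ _] : is_ideal B V := ideal_gen_ideal _ _.
have XV y : y \in X -> badd B y (bopp B x) \in V.
  by move=> Xy; apply: (subsetP (ideal_gen_sub _ _)); apply/imset2P; exists y x.
have starV := star_min_ideal Vmin B3_0.
have lamV v : v \in V -> blam B v =1 id.
  by move=> Vv b; rewrite lamE starV // add0r.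
have Nconj := stab_setT (conj0 B) (conjM B) X_gen Xx XV (NA _ (calA_A (calA_id _ _)))
  (fun v Vv n => Nnorm v n Vv).
have lamV_N v : v \in V -> {homo blam B v : n / n \in N} by move=> Vv n; rewrite lamV.
have Nlam := stab_setT (lam0 B) (lamD_triv V_addsub V_triv lamV) X_gen Xx XV
  (NA _ (calA_A' (calA_id _ _))) lamV_N.
have N_ideal : is_ideal B N.
  apply: ideal_of_star => // i b Ni.
  by rewrite starV ?(subsetP NV) //; have [] := addsubP _ _ N_addsub.
have [-> | N_neq0] := eqVneq N [set bzero B]; [left | right] => //.
by apply/eqP; rewrite eqEsubset NV Vmin.
Qed.
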